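(* Fix $\lambda>0$ and let $M_\lambda$ be as in the context. Then $M_\lambda'(x)=0$ for $0<x<1$ and for $1<x<2$, and for all $x>1$, \[ M'_{\lambda}(x+1)=\frac{\int_1^x\lambda\sinh(\lambda t)M'_{\lambda}(t)\,dt+\lambda\sinh(\lambda)}{\cosh(\lambda x)-1}. \]
   Context: For $\lambda>0$, $M_\lambda:[0,\infty)\to\mathbb R$ is defined by $M_\lambda(x)=0$ for $0\le x\le1$ and, for all $x>0$, $M_{\lambda}(x+1)=\int_0^x\frac{\lambda e^{-\lambda t}}{1-e^{-\lambda x}}\bigl(M_{\lambda}(t)+M_{\lambda}(x-t)\bigr)\,dt+1$. This determines $M_\lambda$ uniquely, interval by interval. $M_\lambda(x)$ is the expected number of unit intervals at saturation in the parking process on $(0,x)$ in which left endpoints are drawn from the truncated exponential density $\lambda e^{-\lambda t}/(1-e^{-\lambda(x-1)})$ on $(0,x-1)$, and overlapping candidates are discarded. *)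

From Stdlib Require Import Reals.
From Coquelicot Require Import Coquelicot.
Open Scope R_scope.

(* Values of M at
   negative arguments are irrelevant. *)
Definition M_spec (lam : R) (M : R -> R) : Prop :=
  (forall x, 0 <= x <= 1 -> M x = 0) /\
  (forall x, 0 < x ->
     is_RInt (fun t => lam * exp (- lam * t) / (1 - exp (- lam * x))
                        * (M t + M (x - t)))
             0 x (M (x + 1) - 1)).

From Stdlib Require Import Reals Lra.
From Coquelicot Require Import Coquelicot.
Open Scope R_scope.

(* Splitting the integrand of the defining equation and substituting t := x - t
   in its second half gives
     (1 - e^{-lam x}) (M (x+1) - 1) = A x + e^{-lam x} B x,
   where A, B integrate lam e^{-lam t} M t and lam e^{lam t} M t over [0, x].
   Hence M = 1 on (1, 2], continuity of M propagates from (1, Y) to (1, Y + 1),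
   and differentiating gives M'(x+1) (cosh (lam x) - 1) = K x + lam sinh lam with
     K y = lam sinh (lam y) M y - lam/2 (A y + B y) - lam sinh lam.
   K vanishes on (1, 2] and K'(y) = lam sinh (lam y) M'(y) for y > 2; since K is
   continuous at 2, where M' jumps, K y is the integral of lam sinh (lam t) M'(t)
   over [1, y]. *)

Ltac smooth_continuous :=
  apply (@ex_derive_continuous R_AbsRing R_NormedModule); auto_derive; auto.

(* Coquelicot's generic continuous_plus etc. do not unify with goals on R -> R. *)
Lemma continuous_Rplus (f g : R -> R) x :
  continuous f x -> continuous g x -> continuous (fun t => f t + g t) x.
Proof. intros Hf Hg. apply (continuous_plus f g); assumption. Qed.

Lemma continuous_Rminus (f g : R -> R) x :
  continuous f x -> continuous g x -> continuous (fun t => f t - g t) x.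
Proof. intros Hf Hg. apply (continuous_minus f g); assumption. Qed.

Lemma continuous_Rmult (f g : R -> R) x :
  continuous f x -> continuous g x -> continuous (fun t => f t * g t) x.
Proof. intros Hf Hg. apply (continuous_mult f g); assumption. Qed.

Lemma continuous_Rdiv (f g : R -> R) x :
  continuous f x -> continuous g x -> g x <> 0 -> continuous (fun t => f t / g t) x.
Proof.
  intros Hf Hg Hg0. apply continuous_Rmult; [exact Hf|].
  now apply continuous_Rinv_comp.
Qed.

Lemma is_RInt_null (f : R -> R) a b :
  (forall t, Rmin a b < t < Rmax a b -> f t = 0) -> is_RInt f a b 0.
Proof.
  intros Hf. apply is_RInt_ext with (fun _ => 0).
  - intros t Ht. symmetry. now apply Hf.
  - pose proof (is_RInt_const (V := R_NormedModule) a b 0) as H.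
    change (scal (b - a) 0) with ((b - a) * 0) in H. now rewrite Rmult_0_r in H.
Qed.

Lemma ex_RInt_continuous_ext (f g : R -> R) a b : a <= b ->
  (forall t, a < t < b -> f t = g t) ->
  (forall t, a <= t <= b -> continuous g t) -> ex_RInt f a b.
Proof.
  intros Hab Hfg Hg. apply ex_RInt_ext with g.
  - rewrite Rmin_left, Rmax_right by lra. intros t Ht. symmetry. now apply Hfg.
  - apply (@ex_RInt_continuous R_CompleteNormedModule).
    rewrite Rmin_left, Rmax_right by lra. exact Hg.
Qed.

Lemma is_RInt_reflect (f : R -> R) x l :
  is_RInt f 0 x l -> is_RInt (fun t => f (x - t)) 0 x l.
Proof.
  intros Hf. apply is_RInt_swap in Hf.
  rewrite <- (Rplus_0_l x), <- (Rmult_0_r (-1)) in Hf at 1.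
  replace 0 with (-1 * x + x) in Hf at 2 by ring.
  apply is_RInt_comp_lin, is_RInt_opp in Hf.
  rewrite opp_opp in Hf. apply is_RInt_ext with (2 := Hf).
  intros t _. unfold opp, scal, mult; simpl. unfold mult; simpl.
  replace (-1 * t + x) with (x - t) by ring. ring.
Qed.

Lemma eq_of_is_derive_0 (h : R -> R) a b : a <= b ->
  (forall t, a < t < b -> is_derive h t 0) ->
  (forall t, a <= t <= b -> continuous h t) -> h b = h a.
Proof.
  intros Hab Hd Hc.
  destruct (MVT_gen h a b (fun _ => 0)) as [c [_ Hmvt]].
  - rewrite Rmin_left, Rmax_right by lra. exact Hd.
  - rewrite Rmin_left, Rmax_right by lra.
    intros t Ht. apply continuity_pt_filterlim, Hc, Ht.
  - lra.
Qed.

Lemma cosh_sub1_gt0 y : 0 < y -> 0 < cosh y - 1.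
Proof.
  intros Hy. unfold cosh. rewrite exp_Ropp.
  assert (Hu : 1 < exp y) by (rewrite <- exp_0; now apply exp_increasing).
  replace ((exp y + / exp y) / 2 - 1) with ((exp y - 1) ^ 2 / (2 * exp y))
    by (field; lra).
  apply Rdiv_lt_0_compat; nra.
Qed.

Lemma forall_by_unit_steps (P : R -> Prop) a :
  (forall z, z < a -> P z) ->
  (forall Y, a <= Y -> (forall z, z < Y -> P z) -> forall z, z < Y + 1 -> P z) ->
  forall z, P z.
Proof.
  intros Hbase Hstep.
  assert (Hn : forall n z, z < a + INR n -> P z).
  { induction n as [|n IH].
    - rewrite Rplus_0_r. exact Hbase.
    - rewrite S_INR, <- Rplus_assoc.
      apply Hstep; [pose proof (pos_INR n); lra | exact IH]. }
  intros z. destruct (nfloor_ex (Rabs (z - a)) (Rabs_pos _)) as [n Hz].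
  apply (Hn (S n)). rewrite S_INR. pose proof (Rle_abs (z - a)). lra.
Qed.

Section ParkingFunction.
Variables (lam : R) (M : R -> R).
Hypothesis lam_gt0 : 0 < lam.
Hypothesis M_le1 : forall x, 0 <= x <= 1 -> M x = 0.
Hypothesis M_rec : forall x, 0 < x ->
  is_RInt (fun t => lam * exp (- lam * t) / (1 - exp (- lam * x)) * (M t + M (x - t)))
    0 x (M (x + 1) - 1).

Lemma exp_neg_lt1 x : 0 < x -> exp (- lam * x) < 1.
Proof. intros Hx. rewrite <- exp_0. apply exp_increasing. nra. Qed.

Lemma M_1_2 z : 1 < z <= 2 -> M z = 1.
Proof.
  intros Hz. enough (M z - 1 = 0) by lra.
  pose proof (M_rec (z - 1) ltac:(lra)) as Hrec.
  replace (z - 1 + 1) with z in Hrec by ring.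
  rewrite <- (is_RInt_unique _ _ _ _ Hrec). apply is_RInt_unique, is_RInt_null.
  rewrite Rmin_left, Rmax_right by lra. intros t Ht.
  rewrite !M_le1 by lra. ring.
Qed.

(* M jumps from 0 to 1 at 1; Mr is M made continuous there. *)
Definition Mr s := if Rle_dec s 1 then 1 else M s.

Lemma Mr_gt1 s : 1 < s -> Mr s = M s.
Proof. intros Hs. unfold Mr. destruct (Rle_dec s 1); lra. Qed.

Lemma Mr_lt2 s : s < 2 -> Mr s = 1.
Proof. intros Hs. unfold Mr. destruct (Rle_dec s 1); [reflexivity | apply M_1_2; lra]. Qed.

Lemma Mr_M_near s : 1 < s -> locally s (fun y => Mr y = M y).
Proof.
  intros Hs. apply (locally_interval _ s 1 p_infty); simpl; auto.
  intros y Hy _. now apply Mr_gt1.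
Qed.

Lemma continuous_Mr_lt2 s : s < 2 -> continuous Mr s.
Proof.
  intros Hs. apply continuous_ext_loc with (fun _ => 1); [|apply continuous_const].
  apply (locally_interval _ s m_infty 2); simpl; auto.
  intros y _ Hy. symmetry. now apply Mr_lt2.
Qed.

Definition wneg t := lam * exp (- lam * t).
Definition wpos t := lam * exp (lam * t).

Lemma continuous_wneg t : continuous wneg t.
Proof. unfold wneg. smooth_continuous. Qed.

Lemma continuous_wpos t : continuous wpos t.
Proof. unfold wpos. smooth_continuous. Qed.

Definition wint (c : R -> R) x := RInt (fun t => c t * M t) 0 x.

Definition Q x :=
  1 + (wint wneg x + exp (- lam * x) * wint wpos x) / (1 - exp (- lam * x)).

Section Bootstrap.
Variable Y : R.
Hypothesis Mr_cont : forall z, z < Y -> continuous Mr z.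

Lemma ex_RInt_wint (c : R -> R) y : (forall t, continuous c t) -> 0 <= y < Y ->
  ex_RInt (fun t => c t * M t) 0 y.
Proof.
  intros Hc Hy.
  assert (H01 : forall y', 0 <= y' <= 1 -> is_RInt (fun t => c t * M t) 0 y' 0).
  { intros y' Hy'. apply is_RInt_null. rewrite Rmin_left, Rmax_right by lra.
    intros t Ht. rewrite M_le1 by lra. ring. }
  destruct (Rle_dec y 1). { eexists. apply H01. lra. }
  apply ex_RInt_Chasles with 1. { eexists. apply H01. lra. }
  apply ex_RInt_continuous_ext with (fun t => c t * Mr t); [lra| |].
  - intros t Ht. now rewrite Mr_gt1 by lra.
  - intros t Ht. apply continuous_Rmult; [apply Hc | apply Mr_cont; lra].
Qed.

Lemma is_RInt_wint_near (c : R -> R) x : (forall t, continuous c t) -> 0 < x < Y ->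
  locally x (fun z => is_RInt (fun t => c t * M t) 0 z (wint c z)).
Proof.
  intros Hc Hx. apply (locally_interval _ x 0 Y); simpl; try lra.
  intros z Hz1 Hz2. apply (@RInt_correct R_CompleteNormedModule).
  apply ex_RInt_wint; auto; lra.
Qed.

Lemma continuous_wint (c : R -> R) x : (forall t, continuous c t) -> 0 < x < Y ->
  continuous (wint c) x.
Proof.
  intros Hc Hx. apply (continuous_RInt_1 (fun t => c t * M t) 0).
  now apply is_RInt_wint_near.
Qed.

Lemma is_derive_wint (c : R -> R) x : (forall t, continuous c t) -> 1 < x < Y ->
  is_derive (wint c) x (c x * M x).
Proof.
  intros Hc Hx. apply (is_derive_RInt (fun t => c t * M t) _ 0).
  { apply is_RInt_wint_near; auto; lra. }
  apply continuous_Rmult; [apply Hc|].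
  apply continuous_ext_loc with Mr; [apply Mr_M_near; lra | apply Mr_cont; lra].
Qed.

(* Substituting t := x - t in the second half of the integrand turns
   lam e^{-lam t} M (x - t) into e^{-lam x} wpos t M t. *)
Lemma M_shift_Q x : 0 < x < Y -> M (x + 1) = Q x.
Proof.
  intros Hx. pose proof (is_RInt_unique _ _ _ _ (M_rec x (proj1 Hx))) as Hrec.
  set (e := exp (- lam * x)) in *.
  assert (He : e < 1) by (apply exp_neg_lt1; lra).
  assert (HA := RInt_correct _ _ _ (ex_RInt_wint wneg x continuous_wneg ltac:(lra))).
  assert (HB := is_RInt_reflect _ _ _
                  (RInt_correct _ _ _ (ex_RInt_wint wpos x continuous_wpos ltac:(lra)))).
  assert (Hsum := is_RInt_scal _ _ _ (/ (1 - e)) _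
                    (is_RInt_plus _ _ _ _ _ _ HA (is_RInt_scal _ _ _ e _ HB))).
  apply is_RInt_ext with
    (g := fun t => lam * exp (- lam * t) / (1 - e) * (M t + M (x - t))) in Hsum.
  - apply (@is_RInt_unique R_CompleteNormedModule) in Hsum. rewrite Hrec in Hsum.
    unfold Q, wint. fold e.
    change (scal _ (plus _ (scal _ _))) with
      (/ (1 - e) * (RInt (fun t => wneg t * M t) 0 x
                    + e * RInt (fun t => wpos t * M t) 0 x)) in Hsum.
    replace (M (x + 1)) with (1 + (M (x + 1) - 1)) by ring.
    rewrite Hsum. field. lra.
  - intros t _. unfold scal, plus, mult; simpl. unfold mult; simpl.
    unfold wneg, wpos, e.
    replace (exp (- lam * t)) with (exp (- lam * x) * exp (lam * (x - t)))
      by (rewrite <- exp_plus; f_equal; ring).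
    field. fold e. lra.
Qed.

Lemma continuous_Q x : 0 < x < Y -> continuous Q x.
Proof.
  intros Hx. pose proof (exp_neg_lt1 x (proj1 Hx)).
  assert (Hexp : continuous (fun s => exp (- lam * s)) x) by smooth_continuous.
  unfold Q. apply continuous_Rplus; [apply continuous_const|].
  apply continuous_Rdiv; [| |lra].
  - apply continuous_Rplus; [apply continuous_wint; auto using continuous_wneg|].
    apply continuous_Rmult; [exact Hexp|]. apply continuous_wint; auto using continuous_wpos.
  - apply continuous_Rminus; [apply continuous_const | exact Hexp].
Qed.

End Bootstrap.

Lemma continuous_Mr z : continuous Mr z.
Proof.
  apply (forall_by_unit_steps _ 2); [exact continuous_Mr_lt2|].
  intros Y HY Mr_cont w Hw. destruct (Rlt_dec w 2); [now apply continuous_Mr_lt2|].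
  apply continuous_ext_loc with (fun s => Q (s - 1)).
  - apply (locally_interval _ w 1 (Y + 1)); simpl; try lra.
    intros s Hs1 Hs2. rewrite Mr_gt1 by lra.
    replace s with (s - 1 + 1) at 2 by ring. symmetry. apply (M_shift_Q Y); auto; lra.
  - apply (continuous_comp (fun s => s - 1) Q).
    + apply continuous_Rminus; [apply continuous_id | apply continuous_const].
    + apply (continuous_Q Y); auto; lra.
Qed.

Definition K y :=
  lam * sinh (lam * y) * Mr y - lam / 2 * (wint wneg y + wint wpos y) - lam * sinh lam.

Definition D x := (K x + lam * sinh lam) / (cosh (lam * x) - 1).

Lemma is_derive_Q x : 1 < x -> is_derive Q x (D x).
Proof.
  intros Hx.
  assert (HA := is_derive_wint (x + 1) (fun z _ => continuous_Mr z) wneg x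
                  continuous_wneg ltac:(lra)).
  assert (HB := is_derive_wint (x + 1) (fun z _ => continuous_Mr z) wpos x
                  continuous_wpos ltac:(lra)).
  assert (Hu : 1 < exp (lam * x)) by (rewrite <- exp_0; apply exp_increasing; nra).
  assert (Hexp : exp (- lam * x) = / exp (lam * x))
    by (rewrite <- exp_Ropp; f_equal; ring).
  unfold Q. auto_derive.
  - repeat split; try (eexists; eassumption).
    pose proof (exp_neg_lt1 x ltac:(lra)). lra.
  - change (Derive (fun t => wint wneg t) x) with (Derive (wint wneg) x).
    change (Derive (fun t => wint wpos t) x) with (Derive (wint wpos) x).
    rewrite (is_derive_unique _ _ _ HA), (is_derive_unique _ _ _ HB).
    unfold D, K, wneg, wpos, sinh, cosh. rewrite Mr_gt1 by lra.
    rewrite !exp_Ropp, Hexp.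
    set (u := exp (lam * x)) in *. pose proof (exp_pos lam).
    field. repeat split; nra.
Qed.

Lemma is_derive_M_shift x : 1 < x -> is_derive M (x + 1) (D x).
Proof.
  intros Hx. apply is_derive_ext_loc with (fun w => Q (w - 1)).
  - apply (locally_interval _ (x + 1) 1 p_infty); simpl; try lra.
    intros w Hw _. replace w with (w - 1 + 1) at 2 by ring. symmetry.
    apply (M_shift_Q (w + 1) (fun z _ => continuous_Mr z)). lra.
  - rewrite <- (scal_one (K := R_AbsRing) (D x)).
    apply (is_derive_comp Q (fun w => w - 1)).
    + replace (x + 1 - 1) with x by ring. now apply is_derive_Q.
    + auto_derive; auto.
Qed.

Lemma is_derive_M_0_1 x : 0 < x < 1 -> is_derive M x 0.
Proof.
  intros Hx. apply is_derive_ext_loc with (fun _ => 0).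
  - apply (locally_interval _ x 0 1); simpl; try lra.
    intros w Hw1 Hw2. symmetry. apply M_le1. lra.
  - apply (is_derive_const (K := R_AbsRing) (0 : R)).
Qed.

Lemma is_derive_M_1_2 x : 1 < x < 2 -> is_derive M x 0.
Proof.
  intros Hx. apply is_derive_ext_loc with (fun _ => 1).
  - apply (locally_interval _ x 1 2); simpl; try lra.
    intros w Hw1 Hw2. symmetry. apply M_1_2. lra.
  - apply (is_derive_const (K := R_AbsRing) (1 : R)).
Qed.

Definition sinhDM t := lam * sinh (lam * t) * Derive M t.

Lemma sinhDM_1_2 t : 1 < t < 2 -> sinhDM t = 0.
Proof.
  intros Ht. unfold sinhDM. rewrite (is_derive_unique _ _ _ (is_derive_M_1_2 t Ht)). ring.
Qed.

Lemma sinhDM_gt2 t : 2 < t -> sinhDM t = lam * sinh (lam * t) * D (t - 1).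
Proof.
  intros Ht. unfold sinhDM. f_equal. apply is_derive_unique.
  replace t with (t - 1 + 1) at 1 by ring. apply is_derive_M_shift. lra.
Qed.

Lemma continuous_K y : 0 < y -> continuous K y.
Proof.
  intros Hy. unfold K.
  apply continuous_Rminus; [|apply continuous_const].
  apply continuous_Rminus.
  - apply continuous_Rmult; [unfold sinh; smooth_continuous | apply continuous_Mr].
  - apply continuous_Rmult; [apply continuous_const|].
    apply continuous_Rplus; apply (continuous_wint (y + 1) (fun z _ => continuous_Mr z));
      auto using continuous_wneg, continuous_wpos; lra.
Qed.

(* Agrees with sinhDM on (2, oo) but, unlike it, is continuous at 2, where M' jumps. *)
Lemma continuous_sinh_D_shift t : 1 < t ->
  continuous (fun s => lam * sinh (lam * s) * D (s - 1)) t.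
Proof.
  intros Ht. apply continuous_Rmult; [unfold sinh; smooth_continuous|].
  apply (continuous_comp (fun s => s - 1) D).
  - apply continuous_Rminus; [apply continuous_id | apply continuous_const].
  - unfold D. apply continuous_Rdiv.
    + apply continuous_Rplus; [apply continuous_K; lra | apply continuous_const].
    + apply continuous_Rminus; [unfold cosh; smooth_continuous | apply continuous_const].
    + pose proof (cosh_sub1_gt0 (lam * (t - 1))). nra.
Qed.

Lemma continuous_sinhDM t : 2 < t -> continuous sinhDM t.
Proof.
  intros Ht.
  apply continuous_ext_loc with (fun s => lam * sinh (lam * s) * D (s - 1)).
  - apply (locally_interval _ t 2 p_infty); simpl; try lra.
    intros s Hs _. symmetry. now apply sinhDM_gt2.
  - apply continuous_sinh_D_shift. lra.
Qed.

Lemma is_RInt_sinhDM_1_2 y : 1 <= y <= 2 -> is_RInt sinhDM 1 y 0.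
Proof.
  intros Hy. apply is_RInt_null. rewrite Rmin_left, Rmax_right by lra.
  intros t Ht. apply sinhDM_1_2. lra.
Qed.

Lemma ex_RInt_sinhDM y : 1 < y -> ex_RInt sinhDM 1 y.
Proof.
  intros Hy. destruct (Rle_dec y 2). { eexists. apply is_RInt_sinhDM_1_2. lra. }
  apply ex_RInt_Chasles with 2. { eexists. apply is_RInt_sinhDM_1_2. lra. }
  apply ex_RInt_continuous_ext with (fun s => lam * sinh (lam * s) * D (s - 1)); [lra| |].
  - intros t Ht. apply sinhDM_gt2. lra.
  - intros t Ht. apply continuous_sinh_D_shift. lra.
Qed.

Lemma wint_1_2 (c F : R -> R) y : (forall t, is_derive F t (c t)) -> (forall t, continuous c t) ->
  1 < y <= 2 -> wint c y = F y - F 1.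
Proof.
  intros HF Hc Hy. unfold wint.
  assert (H01 : is_RInt (fun t => c t * M t) 0 1 0).
  { apply is_RInt_null. rewrite Rmin_left, Rmax_right by lra.
    intros t Ht. rewrite M_le1 by lra. ring. }
  assert (H12 : is_RInt (fun t => c t * M t) 1 y (minus (F y) (F 1))).
  { apply is_RInt_ext with c.
    - rewrite Rmin_left, Rmax_right by lra.
      intros t Ht. now rewrite M_1_2, Rmult_1_r by lra.
    - apply (@is_RInt_derive R_CompleteNormedModule); auto. }
  rewrite (is_RInt_unique _ _ _ _ (is_RInt_Chasles _ _ _ _ _ _ H01 H12)).
  change (0 + (F y - F 1) = F y - F 1). ring.
Qed.

Lemma K_1_2 y : 1 < y <= 2 -> K y = 0.
Proof.
  intros Hy. unfold K.
  rewrite (wint_1_2 wneg (fun t => - exp (- lam * t))), (wint_1_2 wpos (fun t => exp (lam * t)));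
    auto using continuous_wneg, continuous_wpos.
  - rewrite Mr_gt1, M_1_2 by lra. unfold sinh.
    replace (- lam * y) with (- (lam * y)) by ring. rewrite !Rmult_1_r.
    replace (- lam * 1) with (- lam) by ring. field.
  - intros t. auto_derive; auto. unfold wpos. ring.
  - intros t. auto_derive; auto. unfold wneg. ring.
Qed.

Lemma is_derive_K y : 2 < y -> is_derive K y (sinhDM y).
Proof.
  intros Hy.
  assert (HA := is_derive_wint (y + 1) (fun z _ => continuous_Mr z) wneg y
                  continuous_wneg ltac:(lra)).
  assert (HB := is_derive_wint (y + 1) (fun z _ => continuous_Mr z) wpos y
                  continuous_wpos ltac:(lra)).
  assert (HMr : is_derive Mr y (Derive M y)).
  { apply is_derive_ext_loc with M.
    - apply (filter_imp (fun s => Mr s = M s)); [now intros s -> | apply Mr_M_near; lra].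
    - apply Derive_correct. exists (D (y - 1)). replace y with (y - 1 + 1) at 1 by ring.
      apply is_derive_M_shift. lra. }
  unfold K, sinhDM, sinh. auto_derive.
  - repeat split; eexists; eassumption.
  - change (Derive (fun t => wint wneg t) y) with (Derive (wint wneg) y).
    change (Derive (fun t => wint wpos t) y) with (Derive (wint wpos) y).
    change (Derive (fun t => Mr t) y) with (Derive Mr y).
    rewrite (is_derive_unique _ _ _ HA), (is_derive_unique _ _ _ HB),
      (is_derive_unique _ _ _ HMr), Mr_gt1 by lra.
    unfold wneg, wpos. replace (- lam * y) with (- (lam * y)) by ring. field.
Qed.

Lemma RInt_sinhDM y : 1 < y -> RInt sinhDM 1 y = K y.
Proof.
  intros Hy. destruct (Rle_dec y 2).
  { rewrite K_1_2 by lra. apply is_RInt_unique, is_RInt_sinhDM_1_2. lra. }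
  assert (Hnear : forall t, 1 < t ->
            locally t (fun z => is_RInt sinhDM 1 z (RInt sinhDM 1 z))).
  { intros t Ht. apply (locally_interval _ t 1 p_infty); simpl; try lra.
    intros z Hz _. apply (@RInt_correct R_CompleteNormedModule), ex_RInt_sinhDM. lra. }
  enough (H : RInt sinhDM 1 y - K y = RInt sinhDM 1 2 - K 2).
  { rewrite (K_1_2 2), (is_RInt_unique _ _ _ _ (is_RInt_sinhDM_1_2 2 ltac:(lra))) in H;
      lra. }
  apply (eq_of_is_derive_0 (fun z => RInt sinhDM 1 z - K z)); [lra| |].
  - intros t Ht. replace 0 with (sinhDM t - sinhDM t) by ring.
    apply (is_derive_minus (fun z => RInt sinhDM 1 z) K).
    + apply (is_derive_RInt sinhDM _ 1); [apply Hnear; lra | apply continuous_sinhDM; lra].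
    + apply is_derive_K. lra.
  - intros t Ht. apply continuous_Rminus.
    + apply (continuous_RInt_1 sinhDM 1), Hnear. lra.
    + apply continuous_K. lra.
Qed.

End ParkingFunction.

Theorem mainTheorem7 (lam : R) (M : R -> R) :
  0 < lam -> M_spec lam M ->
  (forall x, 0 < x < 1 -> is_derive M x 0) /\
  (forall x, 1 < x < 2 -> is_derive M x 0) /\
  (forall x, 1 < x ->
     ex_RInt (fun t => lam * sinh (lam * t) * Derive M t) 1 x /\
     is_derive M (x + 1)
       ((RInt (fun t => lam * sinh (lam * t) * Derive M t) 1 x
         + lam * sinh lam) / (cosh (lam * x) - 1))).
Proof.
  intros lam_gt0 [M_le1 M_rec].
  split; [|split].
  - intros x Hx. now apply is_derive_M_0_1.
  - intros x Hx. eapply is_derive_M_1_2; eauto.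
  - intros x Hx. split.
    + eapply ex_RInt_sinhDM; eauto.
    + change (is_derive M (x + 1)
                ((RInt (sinhDM lam M) 1 x + lam * sinh lam) / (cosh (lam * x) - 1))).
      erewrite RInt_sinhDM; eauto.
      eapply is_derive_M_shift; eauto.
Qed.
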